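(* Consider $n$ agents, where agent $i$ has a private type $t_i\in[0,\infty)$ and additive valuation $v_i(t_i,S)=t_i+w_i(S)$ for winning sets $S\ni i$ (and $v_i(t_i,S)=0$ for $S\not\ni i$), with publicly known $w_i$. Then an allocation rule $\mathcal{A}:[0,\infty)^n\to2^{[n]}$ can be truthfully implemented if and only if it is monotone: for every agent $i$, every $b_{-i}$ and every $b_i'\ge b_i$, $i\in\mathcal{A}(b_{-i},b_i)$ implies $i\in\mathcal{A}(b_{-i},b_i')$.
   Context: $\mathcal{A}$ can be truthfully implemented if there exist payment functions $p_i$, with $p_i(b)=0$ whenever $i\notin\mathcal{A}(b)$, such that for every $i$, every $b_{-i}$ and all $t_i,b_i\in[0,\infty)$: $v_i(t_i,\mathcal{A}(b_{-i},t_i))-p_i(b_{-i},t_i)\ge v_i(t_i,\mathcal{A}(b_{-i},b_i))-p_i(b_{-i},b_i)$. *)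

From HB Require Import structures.
From mathcomp Require Import all_boot all_order all_algebra.
From mathcomp Require Import reals.
Set Implicit Arguments. Unset Strict Implicit. Unset Printing Implicit Defensive.
Import Order.TTheory GRing.Theory Num.Theory.
Local Open Scope ring_scope.

Definition profile (R : realType) (n : nat) := 'I_n -> R.

(* The profile (b_{-i}, x): b with the i-th coordinate replaced by x. *)
Definition upd (R : realType) (n : nat) (b : profile R n) (i : 'I_n) (x : R)
  : profile R n := fun j => if j == i then x else b j.

Definition nonneg_profile (R : realType) (n : nat) (b : profile R n) : Prop :=
  forall j, 0 <= b j.

Definition addval (R : realType) (n : nat) (w : 'I_n -> {set 'I_n} -> R)
  (i : 'I_n) (t : R) (S : {set 'I_n}) : R :=
  if i \in S then t + w i S else 0.

Definition truthfully_implementable (R : realType) (n : nat)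
  (v : 'I_n -> R -> {set 'I_n} -> R)
  (A : profile R n -> {set 'I_n}) : Prop :=
  exists p : 'I_n -> profile R n -> R,
    (forall i b, nonneg_profile b -> i \notin A b -> p i b = 0) /\
    (forall i (b : profile R n) (t bi : R), nonneg_profile b -> 0 <= t -> 0 <= bi ->
       v i t (A (upd b i bi)) - p i (upd b i bi)
         <= v i t (A (upd b i t)) - p i (upd b i t)).

Definition monotone_alloc (R : realType) (n : nat)
  (A : profile R n -> {set 'I_n}) : Prop :=
  forall i (b : profile R n) (bi bi' : R), nonneg_profile b -> 0 <= bi -> bi <= bi' ->
    i \in A (upd b i bi) -> i \in A (upd b i bi').

(* If bid [b] wins at payment [p] and a higher bid [b'] loses (paying 0),
   truthfulness of type [b'] against [b] and of type [b] against [b'] gives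
   [b' + w - p <= 0 <= b + w - p], contradicting [b < b'].  Conversely, for a
   monotone rule every bid above the infimum of agent [i]'s winning bids
   wins, so charging a winner that threshold plus [w i S] is truthful: a
   winner's utility [t - threshold] is nonnegative, and only types
   below the threshold lose. *)

From HB Require Import structures.
From mathcomp Require Import all_boot all_order all_algebra.
From mathcomp Require Import reals.
From mathcomp Require Import boolp classical_sets.
From mathcomp Require Import lra.
Set Implicit Arguments. Unset Strict Implicit. Unset Printing Implicit Defensive.
Import Order.TTheory GRing.Theory Num.Theory.
Local Open Scope ring_scope.
Local Open Scope classical_set_scope.

Section Profiles.
Variables (R : realType) (n : nat).
Implicit Types (b : profile R n) (i : 'I_n).

Lemma upd_upd b i x y : upd (upd b i y) i x = upd b i x.
Proof. by apply: funext => j; rewrite /upd; case: (j == i). Qed.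

Lemma upd_nonneg b i x :
  nonneg_profile b -> 0 <= x -> nonneg_profile (upd b i x).
Proof. by move=> hb hx j; rewrite /upd; case: (j == i). Qed.

End Profiles.

Lemma truthful_alloc_monotone (R : realType) (n : nat)
    (w : 'I_n -> {set 'I_n} -> R) (A : profile R n -> {set 'I_n}) :
  truthfully_implementable (addval w) A -> monotone_alloc A.
Proof.
move=> [p [p_lose truthful]] i b bi bi' hb hbi le_bi wins.
have hbi' : 0 <= bi' by apply: le_trans le_bi.
apply/negPn/negP => loses.
have lt_bi : bi < bi'.
  by rewrite lt_neqAle le_bi andbT; apply: contraNneq loses => <-.
have := truthful i b bi bi' hb hbi hbi'.
have := truthful i b bi' bi hb hbi' hbi.
rewrite /addval (negbTE loses) wins (p_lose _ _ (upd_nonneg _ hb hbi') loses).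
move=> deviate_down deviate_up.
lra.
Qed.

Section Critical_payment.
Variables (R : realType) (n : nat) (w : 'I_n -> {set 'I_n} -> R).
Variable A : profile R n -> {set 'I_n}.
Implicit Types (b : profile R n) (i : 'I_n).

Definition winning_bids i b : set R := [set x | 0 <= x /\ i \in A (upd b i x)].

Definition critical_payment i b : R :=
  if i \in A b then inf (winning_bids i b) + w i (A b) else 0.

Lemma winning_bids_upd i b y : winning_bids i (upd b i y) = winning_bids i b.
Proof. by rewrite /winning_bids; apply: funext => x /=; rewrite upd_upd. Qed.

Lemma winning_bids_lbound i b : has_lbound (winning_bids i b).
Proof. by exists 0 => x []. Qed.

Lemma inf_winning_bids_le i b t :
  0 <= t -> i \in A (upd b i t) -> inf (winning_bids i b) <= t.
Proof. by move=> ht wins; apply: ge_inf (winning_bids_lbound i b) _ _. Qed.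

Lemma losing_bid_le_inf i b t bi :
  monotone_alloc A -> nonneg_profile b -> 0 <= bi ->
  i \in A (upd b i bi) -> i \notin A (upd b i t) ->
  t <= inf (winning_bids i b).
Proof.
move=> mono hb hbi wins loses; apply: lb_le_inf; first by exists bi.
move=> x [hx winsx]; rewrite leNgt; apply: contraNN loses => lt_tx.
exact: mono hb hx (ltW lt_tx) winsx.
Qed.

Lemma critical_payment_truthful :
  monotone_alloc A -> truthfully_implementable (addval w) A.
Proof.
move=> mono; exists critical_payment; split.
  by move=> i b _ /negbTE; rewrite /critical_payment => ->.
move=> i b t bi hb ht hbi.
rewrite /critical_payment !winning_bids_upd /addval.
case: ifPn => wins_bi; case: ifPn => wins_t; rewrite ?subrr ?subr0.
- lra.
- by have := losing_bid_le_inf mono hb hbi wins_bi wins_t; lra.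
- by have := inf_winning_bids_le ht wins_t; lra.
- by [].
Qed.

End Critical_payment.

Theorem corollary1 (R : realType) (n : nat) (w : 'I_n -> {set 'I_n} -> R)
  (A : profile R n -> {set 'I_n}) :
  truthfully_implementable (addval w) A <-> monotone_alloc A.
Proof.
split; [exact: truthful_alloc_monotone | exact: critical_payment_truthful].
Qed.
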